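(* Let $K\ge1$, $T\ge1$ and $\ell_1,\dots,\ell_T\in[0,1]^K$. The regret of AdaHedge satisfies $\mathcal{R}^{\mathrm{ah}}_T=M^{\mathrm{ah}}_T-L^*_T+\Delta^{\mathrm{ah}}_T\le2\Delta^{\mathrm{ah}}_T$.
   Context: Hedge setting: $K$ experts; in round $t$ the learner chooses a probability vector $w_t$, then $\ell_t$ is revealed and the learner suffers $h_t=\sum_kw_{t,k}\ell_{t,k}$. Write $L_{t,k}=\sum_{s=1}^t\ell_{s,k}$ ($L_{0,k}=0$), $L^*_t=\min_kL_{t,k}$, $H_T=\sum_{t\le T}h_t$, regret $\mathcal{R}_T=H_T-L^*_T$. Exponential weights with learning rate $\eta\in(0,\infty]$ at time $t$: $w_{t,k}=e^{-\eta L_{t-1,k}}/\sum_je^{-\eta L_{t-1,j}}$ if $\eta<\infty$; for $\eta=\infty$, $w_t$ uniform on $\{k:L_{t-1,k}=L^*_{t-1}\}$. With learning rate $\eta_t$ in round $t$: mix loss $m_t=-\frac1{\eta_t}\ln\sum_kw_{t,k}e^{-\eta_t\ell_{t,k}}$ if $\eta_t<\infty$, $m_t=L^*_t-L^*_{t-1}$ if $\eta_t=\infty$; mixability gap $\delta_t=h_t-m_t$; $M_T=\sum_{t\le T}m_t$. AdaHedge: $\Delta^{\mathrm{ah}}_0=0$; in round $t$, $\eta^{\mathrm{ah}}_t=\ln K/\Delta^{\mathrm{ah}}_{t-1}$ ($=\infty$ if $\Delta^{\mathrm{ah}}_{t-1}=0$), weights are exponential weights with learning rate $\eta^{\mathrm{ah}}_t$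 from $L_{t-1}$, and $\Delta^{\mathrm{ah}}_t=\Delta^{\mathrm{ah}}_{t-1}+\delta^{\mathrm{ah}}_t$. Superscript ah denotes quantities for AdaHedge. *)

From HB Require Import structures.
From mathcomp Require Import all_boot all_order all_algebra.
From mathcomp Require Import all_classical all_reals all_analysis.
Set Implicit Arguments. Unset Strict Implicit. Unset Printing Implicit Defensive.
Import Order.TTheory GRing.Theory Num.Theory.
Local Open Scope ring_scope.

Section AdaHedge.
Variables (R : realType) (K : nat) (k0 : 'I_K).
(* loss vectors: round t (t >= 1) has loss vector ell t : 'I_K -> R *)
Variable ell : nat -> 'I_K -> R.

Definition Lcum (t : nat) (k : 'I_K) : R := \sum_(1 <= s < t.+1) ell s k.

(* minimum of a vector (k0 only serves as seed; K >= 1) *)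
Definition minL (L : 'I_K -> R) : R := \big[Num.min/L k0]_(k < K) L k.

Definition Lstar (t : nat) : R := minL (Lcum t).

(* learning rates in (0, oo]: None stands for eta = oo *)
Definition ew (eta : option R) (L : 'I_K -> R) (k : 'I_K) : R :=
  match eta with
  | Some e => expR (- e * L k) / \sum_(j < K) expR (- e * L j)
  | None => if L k == minL L
            then (#|[pred j : 'I_K | L j == minL L]|%:R)^-1 else 0
  end.

Definition wt (eta : option R) (t : nat) : 'I_K -> R := ew eta (Lcum t.-1).
Definition hloss (eta : option R) (t : nat) : R :=
  \sum_(k < K) wt eta t k * ell t k.
Definition mloss (eta : option R) (t : nat) : R :=
  match eta with
  | Some e => - e^-1 * ln (\sum_(k < K) wt eta t k * expR (- e * ell t k))
  | None => Lstar t - Lstar t.-1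
  end.
Definition mgap (eta : option R) (t : nat) : R := hloss eta t - mloss eta t.

Definition ah_eta (D : R) : option R :=
  if D == 0 then None else Some (ln (K%:R) / D).

Fixpoint ah_Delta (t : nat) : R :=
  match t with
  | 0 => 0
  | t'.+1 => ah_Delta t' + mgap (ah_eta (ah_Delta t')) t'.+1
  end.

Definition ah_eta_t (t : nat) : option R := ah_eta (ah_Delta t.-1).
Definition ah_h (t : nat) : R := hloss (ah_eta_t t) t.
Definition ah_m (t : nat) : R := mloss (ah_eta_t t) t.

Definition ah_H (T : nat) : R := \sum_(1 <= t < T.+1) ah_h t.
Definition ah_M (T : nat) : R := \sum_(1 <= t < T.+1) ah_m t.
Definition ah_regret (T : nat) : R := ah_H T - Lstar T.
End AdaHedge.

From HB Require Import structures.
From mathcomp Require Import all_boot all_order all_algebra.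
From mathcomp Require Import all_classical all_reals all_analysis.
From mathcomp Require Import ring lra zify.
Set Implicit Arguments. Unset Strict Implicit. Unset Printing Implicit Defensive.
Import Order.TTheory GRing.Theory Num.Theory.
Local Open Scope ring_scope.

(* With the potential Phi_eta(L) = - eta^-1 ln (sum_k exp (- eta L_k)), and
   Phi_oo = min, the mix loss of round t is Phi_eta_t(L_t) - Phi_eta_t(L_(t-1)).
   For AdaHedge eta_t = ln K / Delta_(t-1), hence Phi_eta_t(L) + Delta_(t-1) is
   - eta_t^-1 ln (mean_k exp (- eta_t L_k)), which is nonincreasing in the rate
   by the power-mean inequality. As Delta only grows, Phi_eta_t(L) + Delta_(t-1)
   is nondecreasing in t, so the mix losses telescope to
   M_T <= Phi_eta_(T+1)(L_T) + Delta_T <= L*_T + Delta_T; with H_T = M_T + Delta_T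
   this is the claim. No bound on the losses is needed. *)

Section ExpRConvexity.
Variable R : realType.

Lemma expR_tangent (a x : R) : expR a + expR a * (x - a) <= expR x.
Proof.
have -> : expR x = expR a * expR (x - a) by rewrite -expRD; congr expR; lra.
have := expR_ge1Dx (x - a); have := expR_gt0 a; nra.
Qed.

Lemma expR_jensen (I : finType) (w x : I -> R) :
  (forall i, 0 <= w i) -> \sum_i w i = 1 ->
  expR (\sum_i w i * x i) <= \sum_i w i * expR (x i).
Proof.
move=> w_ge0 w_sum1.
have tangent_avg c : \sum_i w i * (expR c + expR c * (x i - c))
    = expR c + expR c * (\sum_i w i * x i - c).
  transitivity (\sum_i ((expR c - expR c * c) * w i + expR c * (w i * x i))).
    by apply: eq_bigr => i _; ring.
  by rewrite big_split /= -!mulr_sumr w_sum1; ring.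
apply: le_trans (ler_sum _ (fun i _ =>
  ler_wpM2l (w_ge0 i) (expR_tangent (\sum_j w j * x j) (x i)))).
by rewrite tangent_avg subrr mulr0 addr0.
Qed.

Lemma expR_convex2 (p u v : R) : 0 <= p <= 1 ->
  expR (p * u + (1 - p) * v) <= p * expR u + (1 - p) * expR v.
Proof.
move=> /andP[p_ge0 p_le1].
have := @expR_jensen bool (fun b => if b then p else 1 - p) (fun b => if b then u else v).
rewrite !big_bool /=; apply=> //; [by case; lra | lra].
Qed.

Lemma sum_expR_gt0 {I : finType} (i0 : I) (f : I -> R) : 0 < \sum_i expR (f i).
Proof.
apply: (@lt_le_trans _ _ (expR (f i0))); first exact: expR_gt0.
by rewrite (bigD1 i0) //= lerDl sumr_ge0 // => i _; exact/ltW/expR_gt0.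
Qed.

Lemma ln_mean_expR_scale (I : finType) (a : I -> R) (p : R) :
  (0 < #|I|)%N -> 0 <= p <= 1 ->
  ln ((\sum_i expR (p * a i)) / #|I|%:R) <= p * ln ((\sum_i expR (a i)) / #|I|%:R).
Proof.
move=> I_gt0 p01; have N_gt0 : 0 < #|I|%:R :> R by rewrite ltr0n.
have [i0 _] := card_gt0P I_gt0.
set m := (\sum_i expR (a i)) / #|I|%:R.
have m_gt0 : 0 < m by rewrite divr_gt0 // (sum_expR_gt0 i0).
set v := ln m; have expR_v : expR v = m by rewrite lnK ?posrE.
(* Convexity of expR, between each [a i] and the log-mean [v]. *)
have sum_le : (\sum_i expR (p * a i)) * expR ((1 - p) * v) <= #|I|%:R * m.
  rewrite mulr_suml; apply: (@le_trans _ _ (\sum_i (p * expR (a i) + (1 - p) * m))).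
    by apply: ler_sum => i _; rewrite -expRD -expR_v; exact: expR_convex2.
  rewrite big_split /= -mulr_sumr sumr_const -[in X in X <= _]mulr_natr.
  have -> : \sum_i expR (a i) = #|I|%:R * m by rewrite /m mulrC divfK ?gt_eqF.
  lra.
rewrite -[X in _ <= X]expRK ler_ln ?posrE ?expR_gt0 ?divr_gt0 ?(sum_expR_gt0 i0) //.
have -> : expR (p * v) = m / expR ((1 - p) * v) by rewrite -expR_v -expRB; congr expR; ring.
by rewrite ler_pdivlMr ?expR_gt0 // mulrAC ler_pdivrMr // [m * _]mulrC.
Qed.

End ExpRConvexity.

Section Potential.
Variables (R : realType) (K : nat) (k0 : 'I_K).

Let K_gt0 : (0 < K)%N := leq_ltn_trans (leq0n k0) (ltn_ord k0).
Let KR_gt0 : 0 < K%:R :> R. Proof. by rewrite ltr0n. Qed.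

Lemma minL_le (L : 'I_K -> R) k : minL k0 L <= L k.
Proof. exact: bigmin_le. Qed.

Lemma minL_attained (L : 'I_K -> R) : exists k, minL k0 L = L k.
Proof.
rewrite /minL; apply: (big_ind (fun x => exists k, x = L k)).
- by exists k0.
- by move=> x y [i ->] [j ->]; rewrite /Num.min; case: ifP => _; [exists i | exists j].
- by move=> i _; exists i.
Qed.

Let Z_gt0 e (L : 'I_K -> R) : 0 < \sum_(k < K) expR (- e * L k) := sum_expR_gt0 k0 _.

Definition potential (eta : option R) (L : 'I_K -> R) : R :=
  match eta with
  | Some e => - e^-1 * ln (\sum_(k < K) expR (- e * L k))
  | None => minL k0 L
  end.

Definition mean_potential (e : R) (L : 'I_K -> R) : R :=
  - e^-1 * ln ((\sum_(k < K) expR (- e * L k)) / K%:R).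

Lemma potential_Some_le_minL e (L : 'I_K -> R) : 0 < e ->
  potential (Some e) L <= minL k0 L.
Proof.
move=> e_gt0 /=; have [k ->] := minL_attained L.
have : expR (- e * L k) <= \sum_(j < K) expR (- e * L j).
  by rewrite (bigD1 k) //= lerDl sumr_ge0 // => i _; exact/ltW/expR_gt0.
rewrite -ler_ln ?posrE ?expR_gt0 ?Z_gt0 // expRK.
by rewrite -invrN ler_ndivrMl ?oppr_lt0.
Qed.

Lemma potential_Some_add e (L : 'I_K -> R) : 0 < e ->
  potential (Some e) L + ln K%:R / e = mean_potential e L.
Proof.
move=> e_gt0; rewrite /mean_potential /= lnM ?posrE ?invr_gt0 ?Z_gt0 //.
by rewrite lnV ?posrE //; ring.
Qed.

Lemma minL_le_mean_potential e (L : 'I_K -> R) : 0 < e ->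
  minL k0 L <= mean_potential e L.
Proof.
move=> e_gt0; rewrite /mean_potential -invrN ler_ndivlMl ?oppr_lt0 //.
rewrite -[X in _ <= X]expRK ler_ln ?posrE ?divr_gt0 ?Z_gt0 ?expR_gt0 //.
rewrite ler_pdivrMr // mulr_natr.
have -> : expR (- e * minL k0 L) *+ K = \sum_(j < K) expR (- e * minL k0 L).
  by rewrite sumr_const card_ord.
apply: ler_sum => j _; rewrite ler_expR; have := minL_le L j; nra.
Qed.

Lemma mean_potential_antimono (e e' : R) (L : 'I_K -> R) : 0 < e' -> e' <= e ->
  mean_potential e L <= mean_potential e' L.
Proof.
move=> e'_gt0 le_e'e; have e_gt0 := lt_le_trans e'_gt0 le_e'e.
have p01 : 0 <= e' / e <= 1.
  by rewrite divr_ge0 ?(ltW e'_gt0) ?(ltW e_gt0) //= ler_pdivrMr // mul1r.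
have card_gt0 : (0 < #|'I_K|)%N by rewrite card_ord.
have := ln_mean_expR_scale (fun k => - e * L k) card_gt0 p01.
rewrite card_ord /mean_potential.
have -> : \sum_(k < K) expR (e' / e * (- e * L k)) = \sum_(k < K) expR (- e' * L k).
  by apply: eq_bigr => k _; congr expR; field; rewrite gt_eqF.
set x := ln _; set y := ln _ => le_xy.
have ie'_gt0 : 0 < e'^-1 by rewrite invr_gt0.
have := ler_wpM2l (ltW ie'_gt0) le_xy.
by rewrite mulrA mulrA mulVf ?gt_eqF // mul1r !mulNr lerN2.
Qed.

Lemma potential_ah_eta_add (D : R) (L : 'I_K -> R) : (1 < K)%N -> 0 < D ->
  potential (ah_eta K D) L + D = mean_potential (ln K%:R / D) L.
Proof.
move=> K_gt1 D_gt0; have lnK_gt0 : 0 < ln K%:R :> R by rewrite ln_gt0 // ltr1n.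
rewrite /ah_eta gt_eqF // -potential_Some_add ?divr_gt0 //.
by rewrite invf_div mulrCA mulfV ?gt_eqF ?mulr1.
Qed.

Lemma potential_ah_eta_mono (D D' : R) (L : 'I_K -> R) : (1 < K)%N ->
  0 <= D -> D <= D' -> potential (ah_eta K D) L + D <= potential (ah_eta K D') L + D'.
Proof.
move=> K_gt1 D_ge0 le_DD'; have lnK_gt0 : 0 < ln K%:R :> R by rewrite ln_gt0 // ltr1n.
have [D'_0|D'_gt0] := eqVneq D' 0.
  by have -> : D = D' by apply/eqP; rewrite eq_le le_DD' D'_0 D_ge0.
have {D'_gt0}D'_gt0 : 0 < D' by rewrite lt_neqAle eq_sym D'_gt0 (le_trans D_ge0).
rewrite (potential_ah_eta_add L K_gt1 D'_gt0).
have [->|D_gt0] := eqVneq D 0.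
  by rewrite /ah_eta eqxx addr0 minL_le_mean_potential ?divr_gt0.
have {D_gt0}D_gt0 : 0 < D by rewrite lt_neqAle eq_sym D_gt0.
rewrite (potential_ah_eta_add L K_gt1 D_gt0) mean_potential_antimono ?divr_gt0 //.
by rewrite ler_pM2l // lef_pV2 ?posrE.
Qed.

End Potential.

Section Weights.
Variables (R : realType) (K : nat) (k0 : 'I_K).

Lemma ew_Some_ge0 e (L : 'I_K -> R) k : 0 <= ew k0 (Some e) L k.
Proof. by rewrite /ew divr_ge0 ?ltW ?expR_gt0 ?(sum_expR_gt0 k0). Qed.

Lemma ew_Some_sum1 e (L : 'I_K -> R) : \sum_(k < K) ew k0 (Some e) L k = 1.
Proof. by rewrite /ew -mulr_suml divff // gt_eqF ?(sum_expR_gt0 k0). Qed.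

Lemma ew_None_sum1 (L : 'I_K -> R) : \sum_(k < K) ew k0 None L k = 1.
Proof.
rewrite /ew -big_mkcond /=.
set A := [pred j | L j == minL k0 L].
rewrite (eq_bigl (mem A)) // sumr_const -[X in X = _]mulr_natr mulVf // pnatr_eq0 -lt0n.
by have [k kE] := minL_attained k0 L; apply/card_gt0P; exists k; rewrite inE -kE.
Qed.

End Weights.

Section MixabilityGap.
Variables (R : realType) (K : nat) (k0 : 'I_K) (ell : nat -> 'I_K -> R).

Lemma Lcum0 k : Lcum ell 0 k = 0.
Proof. by rewrite /Lcum big_geq. Qed.

Lemma LcumS t k : Lcum ell t.+1 k = Lcum ell t k + ell t.+1 k.
Proof. by rewrite /Lcum big_nat_recr. Qed.

Lemma mloss_potential eta t :
  mloss k0 ell eta t.+1 = potential k0 eta (Lcum ell t.+1) - potential k0 eta (Lcum ell t).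
Proof.
case: eta => [e|] //=; rewrite /wt /ew /=.
set Z := \sum_(k < K) expR (- e * Lcum ell t k).
have -> : \sum_(k < K) expR (- e * Lcum ell t k) / Z * expR (- e * ell t.+1 k)
    = (\sum_(k < K) expR (- e * Lcum ell t.+1 k)) / Z.
  by rewrite mulr_suml; apply: eq_bigr => k _; rewrite LcumS mulrDr expRD mulrAC.
rewrite lnM ?posrE ?invr_gt0 ?(sum_expR_gt0 k0) // lnV ?posrE ?(sum_expR_gt0 k0) //.
by rewrite /Z; ring.
Qed.

Lemma mgap_Some_ge0 e t : 0 < e -> 0 <= mgap k0 ell (Some e) t.
Proof.
move=> e_gt0; rewrite /mgap /hloss /mloss subr_ge0 -invrN ler_ndivrMl ?oppr_lt0 //.
have jensen := expR_jensen (fun k => - e * ell t k)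
  (ew_Some_ge0 k0 e (Lcum ell t.-1)) (ew_Some_sum1 k0 e (Lcum ell t.-1)).
rewrite -[X in X <= _]expRK ler_ln ?posrE ?expR_gt0 ?(lt_le_trans (expR_gt0 _) jensen) //.
by rewrite mulr_sumr; under eq_bigr do rewrite mulrCA.
Qed.

Lemma mgap_None_ge0 t : 0 <= mgap k0 ell None t.+1.
Proof.
rewrite /mgap /hloss /mloss /wt /Lstar /= subr_ge0.
set d := _ - _.
have -> : d = \sum_(k < K) ew k0 None (Lcum ell t) k * d.
  by rewrite -mulr_suml ew_None_sum1 mul1r.
apply: ler_sum => k _; rewrite /ew; case: ifP => [/eqP kmin|_]; last by rewrite !mul0r.
apply: ler_wpM2l; first by rewrite invr_ge0.
by have := minL_le k0 (Lcum ell t.+1) k; rewrite LcumS kmin /d; lra.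
Qed.

Lemma mgap_None_eq0 t : (K <= 1)%N -> mgap k0 ell None t.+1 = 0.
Proof.
move=> K_le1; have ord_k0 (i : 'I_K) : i = k0.
  by apply: ord_inj; have := ltn_ord i; have := ltn_ord k0; lia.
have sum_k0 (f : 'I_K -> R) : \sum_(k < K) f k = f k0.
  by rewrite (bigD1 k0) //= big1 ?addr0 // => j; rewrite (ord_k0 j) eqxx.
have minL_k0 (L : 'I_K -> R) : minL k0 L = L k0.
  by have [k ->] := minL_attained k0 L; rewrite (ord_k0 k).
have := ew_None_sum1 k0 (Lcum ell t); rewrite sum_k0 => w_k0.
by rewrite /mgap /hloss /mloss /wt /Lstar sum_k0 succnK w_k0 !minL_k0 LcumS; ring.
Qed.

Lemma mgap_ah_eta_ge0 D t : (1 < K)%N -> 0 <= D -> 0 <= mgap k0 ell (ah_eta K D) t.+1.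
Proof.
move=> K_gt1 D_ge0; rewrite /ah_eta; have [_|D_neq0] := eqVneq D 0.
  exact: mgap_None_ge0.
by rewrite mgap_Some_ge0 // divr_gt0 ?ln_gt0 ?ltr1n // lt_neqAle eq_sym D_neq0.
Qed.

End MixabilityGap.

Section AdaHedge.
Variables (R : realType) (K : nat) (k0 : 'I_K) (ell : nat -> 'I_K -> R).

Local Notation Delta := (ah_Delta k0 ell).

Let big_nat_recr1 (f : nat -> R) n :
  \sum_(1 <= s < n.+2) f s = \sum_(1 <= s < n.+1) f s + f n.+1.
Proof. exact: big_nat_recr. Qed.

Lemma ah_H_eq T : ah_H k0 ell T = ah_M k0 ell T + Delta T.
Proof.
elim: T => [|t IH]; first by rewrite /ah_H /ah_M !big_geq // addr0.
rewrite /ah_H /ah_M !big_nat_recr1 -/(ah_H _ _ _) -/(ah_M _ _ _) IH /=.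
by rewrite /mgap /ah_h /ah_m /ah_eta_t /=; ring.
Qed.

Lemma ah_Delta_ge0 t : (1 < K)%N -> 0 <= Delta t.
Proof.
move=> K_gt1; elim: t => [|t IH] //=.
by rewrite addr_ge0 ?mgap_ah_eta_ge0.
Qed.

(* For K = 1 the rate ln K / Delta would be 0; instead Delta never leaves 0. *)
Lemma ah_Delta_eq0 t : (K <= 1)%N -> Delta t = 0.
Proof.
move=> K_le1; elim: t => [|t IH] //=.
by rewrite IH /ah_eta eqxx mgap_None_eq0 // addr0.
Qed.

Lemma ah_potential_step t (L : 'I_K -> R) :
  potential k0 (ah_eta K (Delta t)) L + Delta t
  <= potential k0 (ah_eta K (Delta t.+1)) L + Delta t.+1.
Proof.
have [K_gt1|K_le1] := ltnP 1 K; last by rewrite !ah_Delta_eq0.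
apply: potential_ah_eta_mono; rewrite ?ah_Delta_ge0 //=.
by rewrite lerDl mgap_ah_eta_ge0 ?ah_Delta_ge0.
Qed.

Lemma ah_potential_le_minL t (L : 'I_K -> R) :
  potential k0 (ah_eta K (Delta t)) L <= minL k0 L.
Proof.
rewrite /ah_eta; have [//|D_neq0] := eqVneq (Delta t) 0.
have [K_gt1|K_le1] := ltnP 1 K; last by rewrite ah_Delta_eq0 ?eqxx in D_neq0.
apply: potential_Some_le_minL; rewrite divr_gt0 ?ln_gt0 ?ltr1n //.
by rewrite lt_neqAle eq_sym D_neq0 ah_Delta_ge0.
Qed.

Lemma ah_M_le_potential t :
  ah_M k0 ell t <= potential k0 (ah_eta K (Delta t)) (Lcum ell t) + Delta t.
Proof.
elim: t => [|t IH].
  rewrite /ah_M big_geq //= /ah_eta eqxx addr0 /=.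
  by have [k ->] := minL_attained k0 (Lcum ell 0); rewrite Lcum0.
rewrite /ah_M big_nat_recr1 -/(ah_M _ _ _) /ah_m /ah_eta_t succnK mloss_potential.
by have := ah_potential_step t (Lcum ell t.+1); lra.
Qed.

Lemma ah_M_le T : ah_M k0 ell T <= Lstar k0 ell T + Delta T.
Proof.
have := ah_M_le_potential T; have := ah_potential_le_minL T (Lcum ell T).
by rewrite /Lstar; lra.
Qed.

End AdaHedge.

Theorem lemma3 (R : realType) (K : nat) (hK : (0 < K)%N) (T : nat) (hT : (0 < T)%N)
  (ell : nat -> 'I_K -> R)
  (hell : forall t k, (1 <= t <= T)%N -> 0 <= ell t k <= 1) :
  let k0 := Ordinal hK in
  ah_regret k0 ell T = ah_M k0 ell T - Lstar k0 ell T + ah_Delta k0 ell T /\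
  ah_M k0 ell T - Lstar k0 ell T + ah_Delta k0 ell T <= 2 * ah_Delta k0 ell T.
Proof.
move=> k0; split; first by rewrite /ah_regret ah_H_eq; ring.
by have := ah_M_le k0 ell T; lra.
Qed.
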